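(* Let $\{\alpha_n\}_{n\ge0}$ be a sequence of positive reals and define $\gamma_0=1$, $\gamma_n=1+\sum_{i=0}^{n-1}\alpha_i$ for $n\ge1$. Suppose $\lim_{n\to\infty}\alpha_n=0$, $\limsup_{n\to\infty}|\alpha_{n+1}^{-1}-\alpha_n^{-1}|<\infty$, $\sum_{n=0}^\infty\alpha_n=\infty$, and there exists $r\in(1,\infty)$ with $\sum_{n=0}^\infty\alpha_n^2\gamma_n^{2r}<\infty$. Then there exists a real number $s\in(0,1)$ such that $\sum_{n=0}^\infty\alpha_n^{1+s}\gamma_n^r<\infty$. *)

From Stdlib Require Import Reals.
From Coquelicot Require Import Coquelicot.
Open Scope R_scope.

Definition gam (alpha : nat -> R) (n : nat) : R :=
  match n with
  | O => 1
  | S m => 1 + sum_n alpha m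
  end.

(* Write a_n = alpha_n and g_n = gam alpha n.  For s = (r + 2) / (2 r + 2) the exponents
   interpolate: a^(1+s) g^r = (a^2 g^(2r))^s (a / g^2)^(1-s), and a weighted geometric mean is
   bounded by the sum of its arguments.  The first argument is summable by hypothesis, and so is
   a_n / g_n^2: once a_n <= 1 <= g_n it is at most 2 (1/g_n - 1/g_(n+1)), a telescoping series
   because g_n tends to infinity. *)
From Stdlib Require Import Reals Lra Lia.
From Coquelicot Require Import Coquelicot.
Open Scope R_scope.

Lemma gam_S (alpha : nat -> R) (n : nat) : gam alpha (S n) = gam alpha n + alpha n.
Proof.
  destruct n as [|m]; simpl.
  - now rewrite sum_O.
  - rewrite sum_Sn. unfold plus; simpl. ring.
Qed.

Lemma gam_ge_1 (alpha : nat -> R) (n : nat) :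
  (forall k, 0 <= alpha k) -> 1 <= gam alpha n.
Proof.
  intros Hnneg. induction n as [|n IH]; [simpl; lra|].
  rewrite gam_S. specialize (Hnneg n). lra.
Qed.

Lemma is_lim_seq_inv_gam (alpha : nat -> R) :
  is_lim_seq (sum_n alpha) p_infty -> is_lim_seq (fun n => / gam alpha n) 0.
Proof.
  intros Hdiv.
  apply (is_lim_seq_incr_1 (fun n => / gam alpha n)); simpl.
  replace (Finite 0) with (Rbar_inv p_infty) by reflexivity.
  apply is_lim_seq_inv; [|discriminate].
  eapply is_lim_seq_plus; [apply is_lim_seq_const | exact Hdiv | reflexivity].
Qed.

Lemma is_series_telescoping (u : nat -> R) (l : R) :
  is_lim_seq u l -> is_series (fun n => u n - u (S n)) (u O - l).
Proof.
  intros Hu.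
  assert (Hsum : forall N, sum_n (fun n => u n - u (S n)) N = u O - u (S N)).
  { induction N as [|N IH]; [now rewrite sum_O|].
    rewrite sum_Sn, IH. unfold plus; simpl. ring. }
  unfold is_series.
  eapply filterlim_ext; [intro N; symmetry; apply Hsum|].
  apply (is_lim_seq_minus' _ _ (u O) l); [apply is_lim_seq_const|].
  now apply (is_lim_seq_incr_1 u l) in Hu.
Qed.

Lemma Rpower_weighted_le_plus (x y s : R) :
  0 < x -> 0 < y -> 0 < s < 1 -> Rpower x s * Rpower y (1 - s) <= x + y.
Proof.
  intros Hx Hy Hs. unfold Rpower. rewrite <- exp_plus.
  apply Rle_trans with (exp (Rmax (ln x) (ln y))).
  - assert (Hmx := Rmax_l (ln x) (ln y)). assert (Hmy := Rmax_r (ln x) (ln y)).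
    assert (Hle : s * ln x + (1 - s) * ln y <= Rmax (ln x) (ln y)) by nra.
    destruct Hle as [Hlt | ->]; [now apply Rlt_le, exp_increasing | apply Rle_refl].
  - rewrite <- (exp_ln x) at 2 by exact Hx. rewrite <- (exp_ln y) at 2 by exact Hy.
    assert (Ex := exp_pos (ln x)). assert (Ey := exp_pos (ln y)).
    apply Rmax_case; lra.
Qed.

Definition interpolation_exponent (r : R) : R := (r + 2) / (2 * r + 2).

Lemma interpolation_exponent_bounds (r : R) : 0 < r -> 0 < interpolation_exponent r < 1.
Proof.
  intros Hr. unfold interpolation_exponent. split; [apply Rdiv_lt_0_compat; lra|].
  apply Rmult_lt_reg_r with (2 * r + 2); [lra|].
  unfold Rdiv. rewrite Rmult_assoc, Rinv_l by lra. lra.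
Qed.

Lemma Rpower_interpolation (a g r : R) :
  0 < a -> 0 < g -> 0 < r ->
  Rpower a (1 + interpolation_exponent r) * Rpower g r
  = Rpower (a ^ 2 * Rpower g (2 * r)) (interpolation_exponent r)
    * Rpower (a / g ^ 2) (1 - interpolation_exponent r).
Proof.
  intros Ha Hg Hr. unfold Rpower. rewrite <- !exp_plus. f_equal.
  rewrite ln_mult, ln_div, !ln_pow, ln_exp by (try apply pow_lt; try apply exp_pos; lra).
  unfold interpolation_exponent. simpl INR. field. lra.
Qed.

Lemma le_twice_inv_sub_inv (a x : R) : 0 < a <= x -> a / x ^ 2 <= 2 * (/ x - / (x + a)).
Proof.
  intros Hax.
  assert (E : 2 * (/ x - / (x + a)) - a / x ^ 2 = a * (x - a) / (x ^ 2 * (x + a)))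
    by (field; lra).
  assert (0 <= a * (x - a) / (x ^ 2 * (x + a))).
  { apply Rle_mult_inv_pos; [nra|]. apply Rmult_lt_0_compat; [apply pow_lt|]; lra. }
  lra.
Qed.

Lemma Rpower_interpolation_le (a g r : R) :
  0 < a -> 0 < g -> 0 < r ->
  Rpower a (1 + interpolation_exponent r) * Rpower g r
  <= a ^ 2 * Rpower g (2 * r) + a / g ^ 2.
Proof.
  intros Ha Hg Hr. rewrite Rpower_interpolation by assumption.
  apply Rpower_weighted_le_plus.
  - apply Rmult_lt_0_compat; [apply pow_lt; lra | apply exp_pos].
  - apply Rdiv_lt_0_compat; [lra | apply pow_lt; lra].
  - now apply interpolation_exponent_bounds.
Qed.

Lemma ex_series_div_gam_sq (alpha : nat -> R) :
  (forall n, 0 < alpha n) -> is_lim_seq alpha 0 -> is_lim_seq (sum_n alpha) p_infty ->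
  ex_series (fun n => alpha n / gam alpha n ^ 2).
Proof.
  intros Hpos Hlim Hdiv.
  destruct (proj2 (is_lim_seq_spec alpha 0) Hlim (mkposreal 1 Rlt_0_1)) as [N HN].
  assert (Htel : ex_series (fun n => / gam alpha n - / gam alpha (S n)))
    by (eexists; apply is_series_telescoping, is_lim_seq_inv_gam, Hdiv).
  apply (ex_series_incr_n _ N).
  apply (@ex_series_le R_AbsRing R_CompleteNormedModule _
    (fun k => 2 * (/ gam alpha (N + k) - / gam alpha (S (N + k))))).
  - intro k. specialize (HN (N + k)%nat ltac:(lia)). simpl in HN.
    assert (Ha := Hpos (N + k)%nat).
    assert (Hg := gam_ge_1 alpha (N + k) (fun j => Rlt_le _ _ (Hpos j))).
    rewrite Rminus_0_r, Rabs_right in HN by lra.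
    change (norm ?z) with (Rabs z).
    rewrite Rabs_right by (apply Rle_ge, Rlt_le, Rdiv_lt_0_compat; [lra | apply pow_lt; lra]).
    rewrite gam_S. apply le_twice_inv_sub_inv. lra.
  - apply (ex_series_incr_n _ N) in Htel. exact (ex_series_scal_l 2 _ Htel).
Qed.

Theorem lemma2p2 (alpha : nat -> R) (r : R)
  (Hpos : forall n, 0 < alpha n)
  (Hlim : is_lim_seq alpha 0)
  (Hlimsup : Rbar_lt (LimSup_seq (fun n => Rabs (/ alpha (S n) - / alpha n))) p_infty)
  (Hdiv : is_lim_seq (sum_n alpha) p_infty)
  (Hr1 : 1 < r)
  (Hr : ex_series (fun n => (alpha n) ^ 2 * Rpower (gam alpha n) (2 * r))) :
  exists s : R, 0 < s < 1 /\
    ex_series (fun n => Rpower (alpha n) (1 + s) * Rpower (gam alpha n) r).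
Proof.
  exists (interpolation_exponent r).
  split; [apply interpolation_exponent_bounds; lra|].
  apply (@ex_series_le R_AbsRing R_CompleteNormedModule _
    (fun n => alpha n ^ 2 * Rpower (gam alpha n) (2 * r) + alpha n / gam alpha n ^ 2)).
  - intro n. change (norm ?z) with (Rabs z).
    rewrite Rabs_right by (apply Rle_ge, Rmult_le_pos; apply Rlt_le, exp_pos).
    apply Rpower_interpolation_le; [apply Hpos | | lra].
    apply (Rlt_le_trans _ 1); [lra | apply gam_ge_1; intro k; apply Rlt_le, Hpos].
  - exact (ex_series_plus _ _ Hr (ex_series_div_gam_sq alpha Hpos Hlim Hdiv)).
Qed.
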